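(* Let $\alpha\in(0,\pi/2)$, $\theta^*_d>0$ and $E_s$ satisfy $E_s>\frac{(\theta^*_d)^2}{2\cos^2\alpha}+\cos\alpha$. Put $$L^*_d=\sqrt{2E_s-(\theta^*_d)^2-2\cos\alpha},\qquad Y^*=\cos\alpha+\tfrac12\left(\theta^*_d\sin\alpha-L^*_d\cos\alpha\right)^2 .$$ Let $$b=4\theta^*_dL^*_d-2\frac{\theta^*_d}{L^*_d}\left((\theta^*_d)^2-\cos\alpha\right)-\tfrac12\pi^2\sin\alpha,\qquad \Delta=\pi^2(\theta^*_d)^2+8\alpha b .$$ Assume $\Delta\ge0$, and define the spring stiffness $$K=\frac{\left(\pi\theta^*_d+\sqrt{\Delta}\right)^2}{16\alpha^2},\qquad \varepsilon=1/\sqrt K .$$ For $Y\in(\cos\alpha,E_s)$ define $\theta_d(Y)$ and $L_d(Y)$ as in the context. Define the angle swept in stance by $$\Delta\theta(Y)=\pi\theta_d(Y)\,\varepsilon+\Big[4\theta_d(Y)L_d(Y)-2\frac{\theta_d(Y)}{L_d(Y)}\big(\theta_d(Y)^2-\cos\alpha\big)-\tfrac12\pi^2\sin\alpha\Big]\varepsilon^2,$$ and the apex return map by $$f(Y)=\cos\big(\alpha-\Delta\theta(Y)\big)+\Big[\sin\big(2\alpha-\Delta\theta(Y)\big)\sqrt{E_s-Y}+\cos\big(2\alpha-\Delta\theta(Y)\big)\sqrt{Y-\cos\alpha}\Big]^2 .$$ Let $d_i\Delta\theta^*=\frac{d}{dY}\Delta\theta(Y)\big|_{Y=Y^*}$ and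 $$D=\theta^*_d\cos2\alpha\,\sqrt{2E_s-(\theta^*_d)^2-2\cos\alpha}+\sin2\alpha\left[E_s-(\theta^*_d)^2-\cos\alpha\right].$$ If $$d_i\Delta\theta^*\in\left(0,\ \frac{2}{\sin\alpha+D}\right),$$ then $Y^*$ is a stable fixed point of $f$, that is, $f(Y^* )=Y^*$ and $|f'(Y^* )|<1$.
   Context: This concerns the dimensionless spring-mass (spring-loaded inverted pendulum) running model with leg rest length $1$, attack angle $\alpha$ (touch-down at $\theta=-\alpha$, height $\cos\alpha$) and total energy $E_s$. For an apex height $Y$, the touch-down angular velocity and radial speed are $$\theta_d(Y)=\sqrt2\left[\cos\alpha\sqrt{E_s-Y}-\sin\alpha\sqrt{Y-\cos\alpha}\right],\qquad L_d(Y)=\sqrt2\left[\sin\alpha\sqrt{E_s-Y}+\cos\alpha\sqrt{Y-\cos\alpha}\right].$$ The quantity $\Delta\theta$ is the second-order (in $\varepsilon=K^{-1/2}$) asymptotic approximation of the stance sweep angle. The map $f$ sends one flight apex height to the next. The stiffness $K$ is chosen so that the stance is symmetric at $Y^*$, i.e. $\Delta\theta(Y^* )=2\alpha$. Note that $\theta_d(Y^* )=\theta^*_d$ and $L_d(Y^* )=L^*_d$. *)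

From Stdlib Require Import Reals.
From Coquelicot Require Import Coquelicot.
Open Scope R_scope.

Definition Ldstar (al Es thd : R) : R := sqrt (2 * Es - thd ^ 2 - 2 * cos al).

Definition Ystar (al Es thd : R) : R :=
  cos al + / 2 * (thd * sin al - Ldstar al Es thd * cos al) ^ 2.

Definition bcoef (al Es thd : R) : R :=
  4 * thd * Ldstar al Es thd
  - 2 * (thd / Ldstar al Es thd) * (thd ^ 2 - cos al)
  - / 2 * PI ^ 2 * sin al.

Definition Disc (al Es thd : R) : R := PI ^ 2 * thd ^ 2 + 8 * al * bcoef al Es thd.

Definition Kstiff (al Es thd : R) : R :=
  (PI * thd + sqrt (Disc al Es thd)) ^ 2 / (16 * al ^ 2).

Definition eps (al Es thd : R) : R := 1 / sqrt (Kstiff al Es thd).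

(* touch-down angular velocity and radial speed for apex height Y *)
Definition theta_d (al Es Y : R) : R :=
  sqrt 2 * (cos al * sqrt (Es - Y) - sin al * sqrt (Y - cos al)).

Definition L_d (al Es Y : R) : R :=
  sqrt 2 * (sin al * sqrt (Es - Y) + cos al * sqrt (Y - cos al)).

Definition DeltaTheta (al Es thd Y : R) : R :=
  let th := theta_d al Es Y in
  let L := L_d al Es Y in
  let e := eps al Es thd in
  PI * th * e
  + (4 * th * L - 2 * (th / L) * (th ^ 2 - cos al) - / 2 * PI ^ 2 * sin al) * e ^ 2.

Definition fmap (al Es thd Y : R) : R :=
  let dt := DeltaTheta al Es thd Y in
  cos (al - dt)
  + (sin (2 * al - dt) * sqrt (Es - Y) + cos (2 * al - dt) * sqrt (Y - cos al)) ^ 2.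

Definition Dcoef (al Es thd : R) : R :=
  thd * cos (2 * al) * sqrt (2 * Es - thd ^ 2 - 2 * cos al)
  + sin (2 * al) * (Es - thd ^ 2 - cos al).

From Stdlib Require Import Reals Lra Psatz.
From Coquelicot Require Import Coquelicot.
Open Scope R_scope.

(* The stiffness K is chosen so that eps is the positive root of the quadratic
   Delta theta = 2 alpha, once one checks that at the apex height Y^* the
   touch-down values are theta_d = theta^*_d and L_d = L^*_d.  A stance sweeping
   exactly 2 alpha is symmetric, so the lift-off state mirrors the touch-down
   state and Y^* is a fixed point.  Differentiating the return map at such a
   point gives f' = 1 - dDT (sin alpha + 2 sqrt (E_s - Y^* ) sqrt (Y^* - cos alpha)),
   the product of square roots is exactly D, and the hypothesis on dDT places
   f' in (-1, 1). *)

Definition apex_map (a b c : R) (g : R -> R) (Y : R) : R :=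
  cos (a - g Y)
  + (sin (2 * a - g Y) * sqrt (b - Y) + cos (2 * a - g Y) * sqrt (Y - c)) ^ 2.

Lemma fmap_apex_map (al Es thd : R) :
  fmap al Es thd = apex_map al Es (cos al) (DeltaTheta al Es thd).
Proof. reflexivity. Qed.

Lemma apex_map_symmetric (a b c : R) (g : R -> R) (y : R) :
  g y = 2 * a -> 0 <= y - c -> apex_map a b c g y = cos a + (y - c).
Proof.
intros Hgy Hyc. unfold apex_map. rewrite Hgy.
replace (a - 2 * a) with (- a) by ring.
replace (2 * a - 2 * a) with 0 by ring.
rewrite cos_neg, sin_0, cos_0.
replace ((0 * sqrt (b - y) + 1 * sqrt (y - c)) ^ 2) with (sqrt (y - c) * sqrt (y - c))
  by ring.
now rewrite sqrt_sqrt.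
Qed.

Lemma is_derive_apex_map_symmetric (a b c : R) (g : R -> R) (y dg : R) :
  is_derive g y dg -> 0 < b - y -> 0 < y - c -> g y = 2 * a ->
  is_derive (apex_map a b c g) y
    (1 - dg * (sin a + 2 * sqrt (b - y) * sqrt (y - c))).
Proof.
intros Hg Hby Hyc Hgy.
assert (Hsqrt : sqrt (y - c) <> 0) by (apply Rgt_not_eq, sqrt_lt_R0; lra).
unfold apex_map. auto_derive.
- repeat split; try (exists dg; exact Hg); lra.
- match goal with |- context [Derive ?f y] => rewrite (is_derive_unique f y dg Hg) end.
  rewrite Hgy.
  replace (a + - (2 * a)) with (- a) by ring.
  replace (2 * a + - (2 * a)) with 0 by ring.
  replace (y + - c) with (y - c) by ring.
  replace (b + - y) with (b - y) by ring.
  rewrite sin_0, cos_0, sin_neg.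
  field. split; [exact Hsqrt |].
  apply Rgt_not_eq, sqrt_lt_R0; lra.
Qed.

(* [4 a / (p + S)] is the root [(S - p) / (2 b)] of [b e^2 + p e = 2 a] with the
   numerator rationalized, which keeps it meaningful when [b = 0]. *)
Lemma quadratic_positive_root (a b p S : R) :
  0 < p + S -> S * S = p ^ 2 + 8 * a * b ->
  p * (4 * a / (p + S)) + b * (4 * a / (p + S)) ^ 2 = 2 * a.
Proof.
intros Hpos HS.
replace (b * (4 * a / (p + S)) ^ 2) with (2 * a * (8 * a * b) / (p + S) ^ 2)
  by (field; lra).
replace (8 * a * b) with (S * S - p ^ 2) by lra.
field; lra.
Qed.

Lemma sqrt_2_mul_sqrt_half_sq (x : R) : 0 <= x -> sqrt 2 * sqrt (/ 2 * x ^ 2) = x.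
Proof.
intros Hx.
rewrite <- sqrt_mult_alt by lra.
replace (2 * (/ 2 * x ^ 2)) with (x ^ 2) by field.
now apply sqrt_pow2.
Qed.

Lemma Rabs_one_sub_lt_1 (d m : R) : 0 < m -> 0 < d < 2 / m -> Rabs (1 - d * m) < 1.
Proof.
intros Hm [Hd0 Hd].
assert (Hdm : d * m < 2).
{ apply (Rmult_lt_compat_r m) in Hd; [| exact Hm].
  now replace (2 / m * m) with 2 in Hd by (field; lra). }
assert (0 < d * m) by nra.
apply Rabs_def1; lra.
Qed.

Section SymmetricStance.

Variables al Es thd : R.
Hypothesis Hal : 0 < al < PI / 2.
Hypothesis Hthd : 0 < thd.
Hypothesis HEs : Es > thd ^ 2 / (2 * cos al ^ 2) + cos al.

Let c := cos al.
Let s := sin al.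
Let L := Ldstar al Es thd.
Let Y := Ystar al Es thd.

Let c_pos : 0 < c.
Proof. apply cos_gt_0; lra. Qed.

Let s_pos : 0 < s.
Proof. apply sin_gt_0; lra. Qed.

Let sin_cos_sq : s ^ 2 + c ^ 2 = 1.
Proof. pose proof (sin2_cos2 al). unfold Rsqr in *. unfold s, c. lra. Qed.

Lemma Ldstar_radicand_mul_cos_sq_gt :
  (2 * Es - thd ^ 2 - 2 * c) * c ^ 2 > thd ^ 2 * s ^ 2.
Proof.
assert (Hq : thd ^ 2 / (2 * c ^ 2) * (2 * c ^ 2) = thd ^ 2)
  by (field; apply Rgt_not_eq, c_pos).
assert (2 * c ^ 2 * Es > 2 * c ^ 2 * (thd ^ 2 / (2 * c ^ 2) + c))
  by (apply Rmult_lt_compat_l; [nra | exact HEs]).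
replace (thd ^ 2 * s ^ 2) with (thd ^ 2 * (s ^ 2 + c ^ 2) - thd ^ 2 * c ^ 2) by ring.
rewrite sin_cos_sq. nra.
Qed.

Lemma Ldstar_sq : L * L = 2 * Es - thd ^ 2 - 2 * c.
Proof.
apply sqrt_sqrt.
pose proof Ldstar_radicand_mul_cos_sq_gt. pose proof c_pos.
assert (0 <= thd ^ 2 * s ^ 2) by (apply Rmult_le_pos; apply pow2_ge_0).
enough (0 < 2 * Es - thd ^ 2 - 2 * c) by lra.
apply (Rmult_lt_reg_r (c ^ 2)); nra.
Qed.

Lemma thd_sin_lt_Ldstar_cos : thd * s < L * c.
Proof.
pose proof Ldstar_radicand_mul_cos_sq_gt as Hsq. rewrite <- Ldstar_sq in Hsq.
assert (0 <= L * c) by (apply Rmult_le_pos; [apply sqrt_pos | apply Rlt_le, c_pos]).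
destruct (Rlt_or_le (thd * s) (L * c)) as [Hlt | Hle]; [exact Hlt |].
assert (L * c * (L * c) <= thd * s * (thd * s)) by (apply Rmult_le_compat; lra).
nra.
Qed.

Lemma Ystar_sub_cos : Y - c = / 2 * (L * c - thd * s) ^ 2.
Proof. unfold Y, Ystar. fold c s L. ring. Qed.

Lemma Es_sub_Ystar : Es - Y = / 2 * (thd * c + L * s) ^ 2.
Proof.
unfold Y, Ystar. fold c s L. apply Rminus_diag_uniq.
replace (Es - (c + / 2 * (thd * s - L * c) ^ 2) - / 2 * (thd * c + L * s) ^ 2)
  with (Es - c - / 2 * (thd ^ 2 + L * L) * (s ^ 2 + c ^ 2)) by ring.
rewrite Ldstar_sq, sin_cos_sq. field.
Qed.

Lemma thd_cos_add_Ldstar_sin_pos : 0 < thd * c + L * s.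
Proof.
pose proof thd_sin_lt_Ldstar_cos. pose proof c_pos. pose proof s_pos.
assert (0 <= L) by apply sqrt_pos.
nra.
Qed.

Lemma sqrt_Es_sub_Ystar : sqrt 2 * sqrt (Es - Y) = thd * c + L * s.
Proof.
rewrite Es_sub_Ystar. apply sqrt_2_mul_sqrt_half_sq.
apply Rlt_le, thd_cos_add_Ldstar_sin_pos.
Qed.

Lemma sqrt_Ystar_sub_cos : sqrt 2 * sqrt (Y - c) = L * c - thd * s.
Proof.
rewrite Ystar_sub_cos. apply sqrt_2_mul_sqrt_half_sq.
pose proof thd_sin_lt_Ldstar_cos. lra.
Qed.

Lemma Es_sub_Ystar_pos : 0 < Es - Y.
Proof.
rewrite Es_sub_Ystar. pose proof thd_cos_add_Ldstar_sin_pos.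
apply Rmult_lt_0_compat; [lra | now apply pow_lt].
Qed.

Lemma Ystar_sub_cos_pos : 0 < Y - c.
Proof.
rewrite Ystar_sub_cos. pose proof thd_sin_lt_Ldstar_cos.
apply Rmult_lt_0_compat; [lra | apply pow_lt; lra].
Qed.

Lemma theta_d_Ystar : theta_d al Es Y = thd.
Proof.
unfold theta_d. fold c s.
replace (sqrt 2 * (c * sqrt (Es - Y) - s * sqrt (Y - c)))
  with (c * (sqrt 2 * sqrt (Es - Y)) - s * (sqrt 2 * sqrt (Y - c))) by ring.
rewrite sqrt_Es_sub_Ystar, sqrt_Ystar_sub_cos.
replace thd with (thd * (s ^ 2 + c ^ 2)) at 3 by (rewrite sin_cos_sq; ring).
ring.
Qed.

Lemma L_d_Ystar : L_d al Es Y = L.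
Proof.
unfold L_d. fold c s.
replace (sqrt 2 * (s * sqrt (Es - Y) + c * sqrt (Y - c)))
  with (s * (sqrt 2 * sqrt (Es - Y)) + c * (sqrt 2 * sqrt (Y - c))) by ring.
rewrite sqrt_Es_sub_Ystar, sqrt_Ystar_sub_cos.
replace L with (L * (s ^ 2 + c ^ 2)) at 3 by (rewrite sin_cos_sq; ring).
ring.
Qed.

Lemma Dcoef_Ystar : Dcoef al Es thd = 2 * sqrt (Es - Y) * sqrt (Y - c).
Proof.
replace (2 * sqrt (Es - Y) * sqrt (Y - c))
  with ((sqrt 2 * sqrt 2) * sqrt (Es - Y) * sqrt (Y - c)) by (rewrite sqrt_sqrt; lra).
replace (sqrt 2 * sqrt 2 * sqrt (Es - Y) * sqrt (Y - c))
  with ((sqrt 2 * sqrt (Es - Y)) * (sqrt 2 * sqrt (Y - c))) by ring.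
rewrite sqrt_Es_sub_Ystar, sqrt_Ystar_sub_cos.
unfold Dcoef. fold c. change (sqrt (2 * Es - thd ^ 2 - 2 * c)) with L.
rewrite cos_2a, sin_2a. fold c s.
replace (Es - thd ^ 2 - c) with ((L * L - thd ^ 2) / 2) by (rewrite Ldstar_sq; field).
replace (c * c - s * s) with (c ^ 2 - s ^ 2) by ring.
field.
Qed.

Lemma eps_Disc : 0 <= Disc al Es thd ->
  eps al Es thd = 4 * al / (PI * thd + sqrt (Disc al Es thd)).
Proof.
intros HD.
assert (0 < PI * thd + sqrt (Disc al Es thd))
  by (pose proof PI_RGT_0; pose proof (sqrt_pos (Disc al Es thd)); nra).
unfold eps, Kstiff.
replace ((PI * thd + sqrt (Disc al Es thd)) ^ 2 / (16 * al ^ 2))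
  with (((PI * thd + sqrt (Disc al Es thd)) / (4 * al)) ^ 2) by (field; lra).
rewrite sqrt_pow2.
- field; lra.
- apply Rlt_le, Rdiv_lt_0_compat; lra.
Qed.

Lemma DeltaTheta_Ystar : 0 <= Disc al Es thd -> DeltaTheta al Es thd Y = 2 * al.
Proof.
intros HD.
unfold DeltaTheta. rewrite theta_d_Ystar, L_d_Ystar, (eps_Disc HD).
change (4 * thd * L - 2 * (thd / L) * (thd ^ 2 - cos al) - / 2 * PI ^ 2 * sin al)
  with (bcoef al Es thd).
apply quadratic_positive_root.
- pose proof PI_RGT_0. pose proof (sqrt_pos (Disc al Es thd)). nra.
- rewrite sqrt_sqrt by exact HD. unfold Disc. ring.
Qed.

End SymmetricStance.

Theorem theorem2 (al Es thd : R) :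
  0 < al < PI / 2 ->
  0 < thd ->
  Es > thd ^ 2 / (2 * cos al ^ 2) + cos al ->
  0 <= Disc al Es thd ->
  forall dDT : R,
    is_derive (DeltaTheta al Es thd) (Ystar al Es thd) dDT ->
    0 < dDT < 2 / (sin al + Dcoef al Es thd) ->
    fmap al Es thd (Ystar al Es thd) = Ystar al Es thd /\
    ex_derive (fmap al Es thd) (Ystar al Es thd) /\
    Rabs (Derive (fmap al Es thd) (Ystar al Es thd)) < 1.
Proof.
intros Hal Hthd HEs HD dDT Hder HdDT.
assert (HEY : 0 < Es - Ystar al Es thd) by now apply Es_sub_Ystar_pos.
assert (HYc : 0 < Ystar al Es thd - cos al) by now apply Ystar_sub_cos_pos.
assert (HDT : DeltaTheta al Es thd (Ystar al Es thd) = 2 * al)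
  by now apply DeltaTheta_Ystar.
pose proof (is_derive_apex_map_symmetric _ _ _ _ _ _ Hder HEY HYc HDT) as Hf.
rewrite <- fmap_apex_map in Hf.
rewrite Dcoef_Ystar in HdDT by assumption.
split; [| split].
- rewrite fmap_apex_map, (apex_map_symmetric _ _ _ _ _ HDT) by lra. ring.
- eexists; exact Hf.
- rewrite (is_derive_unique _ _ _ Hf).
  apply Rabs_one_sub_lt_1; [| exact HdDT].
  assert (0 < sin al) by (apply sin_gt_0; lra).
  assert (0 < sqrt (Es - Ystar al Es thd)) by (apply sqrt_lt_R0; exact HEY).
  assert (0 < sqrt (Ystar al Es thd - cos al)) by (apply sqrt_lt_R0; exact HYc).
  nra.
Qed.
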